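(* Let $C$ be a linear code of length $n$ over $B_k$ such that $C=\overline{\Psi}_k^{-1}(C_1,\dots,C_{2^k})$ for some linear codes $C_1,\dots,C_{2^k}$ of length $n$ over $\mathbb{F}_{p^r}$. Then $d_H(C)=\min_{1\le i\le 2^k}d_H(C_i)$.
   Context: Let $p$ be a prime, $r\ge 1$, $\mathbb{F}_{p^r}$ the field with $p^r$ elements, and for $k\ge1$ let $B_k=\mathbb{F}_{p^r}[v_1,\dots,v_k]/\langle v_i^2-v_i,\ v_iv_j-v_jv_i\rangle$. A linear code over $B_k$ is a $B_k$-submodule of $B_k^n$; a linear code over $\mathbb{F}_{p^r}$ is a subspace of $\mathbb{F}_{p^r}^n$. For $H\subseteq\{1,\dots,k\}$ put $v_H=\prod_{i\in H}v_i$ ($v_\emptyset=1$); every $a\in B_k$ is uniquely $a=\sum_{H}\alpha_Hv_H$ with $\alpha_H\in\mathbb{F}_{p^r}$. Fix an enumeration $H_1,\dots,H_{2^k}$ of the subsets of $\{1,\dots,k\}$ and define $\Psi_k:B_k\to\mathbb{F}_{p^r}^{2^k}$ by $\Psi_k(a)=\big(\sum_{H\subseteq H_1}\alpha_H,\dots,\sum_{H\subseteq H_{2^k}}\alpha_H\big)$. For subsets $C_1,\dots,C_{2^k}\subseteq\mathbb{F}_{p^r}^n$, $\overline{\Psi}_k^{-1}(C_1,\dots,C_{2^k})$ is the set of $(a_1,\dots,a_n)\in B_k^n$ such that for each $j$ the vector $(\Psi_k(a_1)_j,\dots,\Psi_k(a_n)_j)$ lies in $C_j$. The Hamming weight of a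 vector over a ring is its number of nonzero coordinates, and $d_H$ of a linear code is the minimum Hamming weight of its nonzero codewords (with $d_H(\{0\})=+\infty$). *)

From HB Require Import structures.
From mathcomp Require Import all_boot all_order all_algebra all_field.
Set Implicit Arguments. Unset Strict Implicit. Unset Printing Implicit Defensive.
Import GRing.Theory.
Local Open Scope ring_scope.

(* Elements of B_k = F[v_1..v_k]/<v_i^2 - v_i, v_i v_j - v_j v_i> are
   represented by their unique coefficient family (alpha_H)_{H subset {1..k}},
   a = sum_H alpha_H v_H, with v_H v_K = v_{H u K}. *)
Definition Bk (F : finFieldType) (k : nat) := {ffun {set 'I_k} -> F}.

Definition Bmul (F : finFieldType) (k : nat) (a b : Bk F k) : Bk F k :=
  [ffun H : {set 'I_k} =>
     \sum_(H1 : {set 'I_k}) \sum_(H2 : {set 'I_k} | H1 :|: H2 == H) a H1 * b H2].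

Definition BkVec (F : finFieldType) (k n : nat) := {ffun 'I_n -> Bk F k}.

Definition Bscale (F : finFieldType) (k n : nat) (a : Bk F k) (c : BkVec F k n)
  : BkVec F k n := [ffun i => Bmul a (c i)].

Definition is_Bk_linear_code (F : finFieldType) (k n : nat)
    (C : {set BkVec F k n}) : Prop :=
  [/\ (0 : BkVec F k n) \in C,
      (forall c d, c \in C -> d \in C -> c + d \in C) &
      (forall (a : Bk F k) c, c \in C -> Bscale a c \in C)].

Definition Psi (F : finFieldType) (k : nat) (a : Bk F k) (J : {set 'I_k}) : F :=
  \sum_(H : {set 'I_k} | H \subset J) a H.

Definition PsiBarInv (F : finFieldType) (k n : nat)
    (Cs : {set 'I_k} -> {vspace 'rV[F]_n}) : {set BkVec F k n} :=
  [set c : BkVec F k n |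
     [forall J : {set 'I_k}, (\row_(i < n) Psi (c i) J) \in Cs J]].

Definition wtF (F : finFieldType) (n : nat) (v : 'rV[F]_n) : nat :=
  #|[set i : 'I_n | v ord0 i != 0]|.
Definition wtB (F : finFieldType) (k n : nat) (c : BkVec F k n) : nat :=
  #|[set i : 'I_n | c i != 0]|.

(* minimum of w over A; None stands for +infinity (A empty) *)
Definition min_over (T : finType) (A : pred T) (w : T -> nat) : option nat :=
  if [pick x in A] is Some x0 then Some (w [arg min_(x < x0 in A) w x])
  else None.

(* minimum distance; None = +oo for the zero code *)
Definition dH_F (F : finFieldType) (n : nat) (C : {vspace 'rV[F]_n}) : option nat :=
  min_over [pred v : 'rV[F]_n | (v \in C) && (v != 0)] (@wtF F n).
Definition dH_B (F : finFieldType) (k n : nat) (C : {set BkVec F k n}) : option nat :=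
  min_over [pred c : BkVec F k n | (c \in C) && (c != 0)] (@wtB F k n).

Definition omin (x y : option nat) : option nat :=
  match x, y with
  | None, _ => y
  | _, None => x
  | Some a, Some b => Some (minn a b)
  end.

From HB Require Import structures.
From mathcomp Require Import all_boot all_order all_algebra all_field.
Set Implicit Arguments. Unset Strict Implicit. Unset Printing Implicit Defensive.
Import GRing.Theory.
Local Open Scope ring_scope.

(* Psi_k is triangular with respect to inclusion of subsets (Psi a J = a J +
   terms indexed by proper subsets of J), hence a bijection of B_k onto
   F^(2^k) that fixes 0.  So a word c of PsiBarInv Cs is nonzero iff one of its
   rows (Psi (c i) J)_i is, and each row is supported inside the support of c;
   conversely, pulling a word v of Cs J back through Psi_k^-1 with all other
   rows zero gives a word of PsiBarInv Cs of the same weight.  Neither the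
   B_k-linearity of C nor the size of F plays any role. *)

Variant min_over_spec (T : finType) (A : pred T) (w : T -> nat) :
    option nat -> Type :=
  | MinOverNone of A =i pred0 : min_over_spec A w None
  | MinOverSome x of x \in A & (forall y, y \in A -> w x <= w y)%N :
      min_over_spec A w (Some (w x)).

Lemma min_overP (T : finType) (A : pred T) (w : T -> nat) :
  min_over_spec A w (min_over A w).
Proof.
rewrite /min_over; case: pickP => [x0 Ax0 | A0]; last exact: MinOverNone.
by case: arg_minnP => // x; apply: MinOverSome.
Qed.

Lemma min_over_dominated (T U : finType) (A : pred T) (B : pred U)
    (w : T -> nat) (v : U -> nat) :
  (forall x, x \in A -> exists2 y, y \in B & (v y <= w x)%N) ->
  (forall y, y \in B -> exists2 x, x \in A & (w x <= v y)%N) ->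
  min_over A w = min_over B v.
Proof.
move=> domA domB; case: min_overP => [A0 | x Ax xmin].
  case: min_overP => // y By _.
  by have [x] := domB y By; rewrite A0 inE.
case: min_overP => [B0 | y By ymin].
  by have [y] := domA x Ax; rewrite B0 inE.
have [y' By' le_y'x] := domA x Ax; have [x' Ax' le_x'y] := domB y By.
congr Some; apply/eqP; rewrite eqn_leq.
by rewrite (leq_trans (xmin x' Ax') le_x'y) (leq_trans (ymin y' By') le_y'x).
Qed.

Lemma eq_min_over (T : finType) (A B : pred T) (w : T -> nat) :
  A =i B -> min_over A w = min_over B w.
Proof.
move=> eqAB.
by apply: min_over_dominated => x; [rewrite eqAB | rewrite -eqAB]; exists x.
Qed.

Lemma omin_min_over (T : finType) (A B : pred T) (w : T -> nat) :
  omin (min_over A w) (min_over B w) = min_over [predU A & B] w.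
Proof.
case: (min_overP A) => [A0 | x Ax xmin].
  by apply: eq_min_over => y; rewrite !inE A0 inE.
case: (min_overP [predU A & B]) => [AB0 | z ABz zmin].
  by have := AB0 x; rewrite !inE Ax.
have le_zx : (w z <= w x)%N by rewrite zmin ?inE ?Ax.
case: (min_overP B) => [B0 | y By ymin].
  congr Some; apply/eqP; rewrite eqn_leq le_zx andbT.
  by case/orP: ABz => [/xmin // | ]; rewrite B0.
congr Some; apply/eqP; rewrite eqn_leq leq_min le_zx zmin ?inE ?By ?orbT //=.
by case/orP: ABz => [/xmin | /ymin] le_z; rewrite geq_min le_z ?orbT.
Qed.

Lemma big_omin_min_over (I T : finType) (A : I -> pred T) (w : T -> nat) :
  \big[omin/None]_i min_over (A i) w
    = min_over [pred x | [exists i, x \in A i]] w.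
Proof.
have big_seq s : \big[omin/None]_(i <- s) min_over (A i) w
                   = min_over [pred x | has (fun i => x \in A i) s] w.
  elim: s => [|i s IHs]; rewrite ?big_nil ?big_cons.
    by case: min_overP => // x.
  by rewrite IHs omin_min_over; apply: eq_min_over => x; rewrite !inE.
rewrite big_seq; apply: eq_min_over => x; rewrite !inE.
apply/hasP/existsP => [[i _ xAi] | [i xAi]]; first by exists i.
by exists i; rewrite ?mem_index_enum.
Qed.

Section PsiTransform.

Variables (F : finFieldType) (k n : nat).

Lemma Psi0 (J : {set 'I_k}) : Psi (0 : Bk F k) J = 0.
Proof. by rewrite /Psi big1 // => H _; rewrite ffunE. Qed.

Lemma Psi_inj (a b : Bk F k) : (forall J, Psi a J = Psi b J) -> a = b.
Proof.
move=> eq_ab; apply/ffunP => H.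
have [m] := ubnP #|H|; elim: m H => // m IHm H ltHm.
have eq_proper : \sum_(H' : {set 'I_k} | (H' \subset H) && (H' != H)) a H' =
                 \sum_(H' : {set 'I_k} | (H' \subset H) && (H' != H)) b H'.
  apply: eq_bigr => H' /andP[sH'H neH'H]; apply: IHm.
  have ltH'H : H' \proper H by rewrite properEneq neH'H sH'H.
  exact: leq_trans (proper_card ltH'H) _.
move: (eq_ab H); rewrite /Psi (bigD1 H) ?subxx //= (bigD1 H (subxx H)) /=.
by rewrite eq_proper; apply: addIr.
Qed.

Definition psi (a : Bk F k) : Bk F k := [ffun J => Psi a J].

Lemma psi_inj : injective psi.
Proof.
by move=> a b /ffunP eq_ab; apply: Psi_inj => J; have := eq_ab J; rewrite !ffunE.
Qed.

Definition psi_inv : Bk F k -> Bk F k := invF psi_inj.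

Lemma Psi_inv (y : Bk F k) (J : {set 'I_k}) : Psi (psi_inv y) J = y J.
Proof. by rewrite -{2}(f_invF psi_inj y) ffunE. Qed.

Lemma Psi_eq0 (a : Bk F k) : (forall J, Psi a J = 0) -> a = 0.
Proof. by move=> a0; apply: Psi_inj => J; rewrite a0 Psi0. Qed.

Definition psi_row (c : BkVec F k n) (J : {set 'I_k}) : 'rV[F]_n :=
  \row_i Psi (c i) J.

Lemma mem_PsiBarInv (Cs : {set 'I_k} -> {vspace 'rV[F]_n}) c :
  (c \in PsiBarInv Cs) = [forall J, psi_row c J \in Cs J].
Proof. by rewrite inE. Qed.

Lemma psi_row_neq0 (c : BkVec F k n) : c != 0 -> exists J, psi_row c J != 0.
Proof.
move=> c0; apply/existsP; apply: contraR c0 => /existsPn rows0.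
apply/eqP/ffunP => i; rewrite ffunE; apply: Psi_eq0 => J.
by have /negPn/eqP/rowP/(_ i) := rows0 J; rewrite !mxE.
Qed.

Lemma wtF_psi_row (c : BkVec F k n) (J : {set 'I_k}) :
  (wtF (psi_row c J) <= wtB c)%N.
Proof.
apply/subset_leq_card/subsetP => i; rewrite !inE mxE.
by apply: contraNN => /eqP ->; rewrite Psi0.
Qed.

Definition psi_lift (J : {set 'I_k}) (v : 'rV[F]_n) : BkVec F k n :=
  [ffun i => psi_inv [ffun J' => if J' == J then v ord0 i else 0]].

Lemma Psi_lift J v i J' :
  Psi (psi_lift J v i) J' = if J' == J then v ord0 i else 0.
Proof. by rewrite ffunE Psi_inv ffunE. Qed.

Lemma psi_row_lift J v J' : psi_row (psi_lift J v) J' = if J' == J then v else 0.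
Proof.
by apply/rowP => i; rewrite mxE Psi_lift; case: eqP => _; rewrite ?mxE ?[ord0]ord1.
Qed.

Lemma wtB_lift J v : wtB (psi_lift J v) = wtF v.
Proof.
apply: eq_card => i; rewrite !inE; congr negb; apply/eqP/eqP => [li0 | vi0].
  by have := Psi_lift J v i J; rewrite eqxx li0 Psi0.
by apply: Psi_eq0 => J'; rewrite Psi_lift vi0 if_same.
Qed.

Lemma wtB_eq0 (c : BkVec F k n) : (wtB c == 0)%N = (c == 0).
Proof.
rewrite cards_eq0; apply/eqP/eqP => [c0 | ->].
  by apply/ffunP => i; apply/eqP; move/setP/(_ i): c0; rewrite !inE ffunE => /negbFE.
by apply/setP => i; rewrite !inE ffunE eqxx.
Qed.

Lemma wtF_eq0 (v : 'rV[F]_n) : (wtF v == 0)%N = (v == 0).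
Proof.
rewrite cards_eq0; apply/eqP/eqP => [v0 | ->].
  apply/rowP => i; apply/eqP; move/setP/(_ i): v0.
  by rewrite !inE !mxE [ord0]ord1 => /negbFE.
by apply/setP => i; rewrite !inE mxE eqxx.
Qed.

End PsiTransform.

Theorem lemma5p5 (p r : nat) (F : finFieldType) (k n : nat)
  (hp : prime p) (hr : (0 < r)%N) (hF : #|F| = (p ^ r)%N) (hk : (1 <= k)%N)
  (C : {set BkVec F k n}) (Cs : {set 'I_k} -> {vspace 'rV[F]_n}) :
  is_Bk_linear_code C ->
  C = PsiBarInv Cs ->
  dH_B C = \big[omin/None]_(J : {set 'I_k}) dH_F (Cs J).
Proof.
move=> _ ->; rewrite big_omin_min_over.
apply: min_over_dominated => [c | v].
- rewrite inE mem_PsiBarInv => /andP[/forallP cC /psi_row_neq0[J rowJ]].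
  exists (psi_row c J); last exact: wtF_psi_row.
  by apply/existsP; exists J; rewrite !inE cC rowJ.
- rewrite inE => /existsP[J]; rewrite !inE => /andP[vCJ v0].
  exists (psi_lift J v); last by rewrite wtB_lift.
  rewrite inE mem_PsiBarInv -wtB_eq0 wtB_lift wtF_eq0 v0 andbT.
  apply/forallP => J'; rewrite psi_row_lift.
  by case: eqP => [-> | _]; rewrite ?mem0v.
Qed.
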